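(* Let $f_d(\mathbf{x})=\psi_{3d}(\sqrt d\,\langle\mathbf{x}^{(1)},\mathbf{x}^{(2)}\rangle)$. There are absolute constants $C_1,C_2$ such that for all $d\ge2$ and $K\in\mathbb{N}$ there is a depth-3 ReLU network $f_{d,K}$ with hidden widths at most $\omega_{d,K}:=\max(6d+2,2Kd)$ such that $\|f_d-f_{d,K}\|_{L^\infty}\le C_1\frac{d^{5/2}}{K}$ and $R_3(f_{d,K};\omega_{d,K})\le C_2d^{5/2}$.
   Context: $\mathcal{X}_d=\mathbb{S}^{d-1}\times\mathbb{S}^{d-1}\subset\mathbb{R}^{2d}$; $\mathbf{x}^{(1)},\mathbf{x}^{(2)}$ are the first and last $d$ coordinates; $\|\cdot\|_{L^\infty}$ is the sup norm over $\mathcal{X}_d$. The sawtooth $\psi_n(t)=-2n[t+1]_++2n[t-1]_++4n\sum_{j=1}^n\big((-1)^{j+n+1}[t-\tfrac{2j-1}{2n}]_++(-1)^{j+n}[t+\tfrac{2j-1}{2n}]_+\big)$. A depth-3 network is $f_\phi(\mathbf{x})=\mathbf{w}_3^\top[\mathbf{W}_2[\mathbf{W}_1\mathbf{x}+\mathbf{b}_1]_++\mathbf{b}_2]_++b_3$; $R_3(f;\omega)=\inf\{\|\phi\|^2/3: f_\phi=f\text{ on }\mathcal{X}_d,\ \text{hidden widths}\le\omega\}$ with $\|\phi\|^2$ the sum of squares of all weights and biases. *)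

From HB Require Import structures.
From mathcomp Require Import all_boot all_order all_algebra.
From mathcomp Require Import all_classical all_reals.
From mathcomp Require Import ereal.

Set Implicit Arguments. Unset Strict Implicit. Unset Printing Implicit Defensive.
Import Order.TTheory GRing.Theory Num.Theory.
Local Open Scope ring_scope.
Local Open Scope classical_set_scope.

Section Defs.
Variable R : realType.

Definition relu (t : R) : R := Num.max t 0.

Definition psi (n : nat) (t : R) : R :=
  - (2 * n%:R) * relu (t + 1) + (2 * n%:R) * relu (t - 1)
  + (4 * n%:R) * \sum_(1 <= j < n.+1)
      ((-1) ^+ (j + n + 1) * relu (t - (2 * j - 1)%:R / (2 * n)%:R)
       + (-1) ^+ (j + n) * relu (t + (2 * j - 1)%:R / (2 * n)%:R)).

Definition x1 (d : nat) (x : 'cV[R]_(d + d)) : 'cV[R]_d := usubmx x.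
Definition x2 (d : nat) (x : 'cV[R]_(d + d)) : 'cV[R]_d := dsubmx x.

Definition dotv (d : nat) (u v : 'cV[R]_d) : R := \sum_(i < d) u i 0 * v i 0.

Definition on_sphere (d : nat) (u : 'cV[R]_d) : Prop := Num.sqrt (dotv u u) = 1.

Definition Xd (d : nat) : set 'cV[R]_(d + d) :=
  [set x | on_sphere (x1 x) /\ on_sphere (x2 x)].

Definition Linf_norm (d : nat) (g : 'cV[R]_(d + d) -> R) : \bar R :=
  ereal_sup [set (`|g x|)%:E | x in @Xd d].

Definition f_target (d : nat) (x : 'cV[R]_(d + d)) : R :=
  psi (3 * d) (Num.sqrt d%:R * dotv (x1 x) (x2 x)).

Record params (d m1 m2 : nat) := Params {
  W1 : 'M[R]_(m1, d + d);
  b1 : 'cV[R]_m1;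
  W2 : 'M[R]_(m2, m1);
  b2 : 'cV[R]_m2;
  w3 : 'cV[R]_m2;
  b3 : R }.

Definition reluv (m : nat) (v : 'cV[R]_m) : 'cV[R]_m := map_mx relu v.

Definition net (d m1 m2 : nat) (p : params d m1 m2) (x : 'cV[R]_(d + d)) : R :=
  ((w3 p)^T *m reluv (W2 p *m reluv (W1 p *m x + b1 p) + b2 p)) 0 0 + b3 p.

Definition sqsum (m n : nat) (A : 'M[R]_(m, n)) : R :=
  \sum_(i < m) \sum_(j < n) A i j ^+ 2.

Definition pnorm2 (d m1 m2 : nat) (p : params d m1 m2) : R :=
  sqsum (W1 p) + sqsum (b1 p) + sqsum (W2 p) + sqsum (b2 p) + sqsum (w3 p)
  + b3 p ^+ 2.

Definition R3 (d : nat) (f : 'cV[R]_(d + d) -> R) (omega : nat) : \bar R :=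
  ereal_inf [set r | exists (m1 m2 : nat) (p : params d m1 m2),
    [/\ (m1 <= omega)%N, (m2 <= omega)%N,
        (forall x, @Xd d x -> net p x = f x) &
        r = (pnorm2 p / 3)%:E]].

End Defs.

From mathcomp Require Import all_boot all_order all_algebra.
From mathcomp Require Import all_classical all_reals.
From mathcomp Require Import ereal.
From mathcomp Require Import ring lra zify.

(* With t = x^(1) + x^(2), on X_d we have sum_i t_i^2 = 2 + 2 <x^(1), x^(2)>
   and |t_i| <= 2.  The first layer squares each t_i up to h^2/4, h = 2/K, by
   the interpolant 2h sum_(j < K) ([t - c_j]_+ + [-t - c_j]_+), c_j = (j + 1/2) h,
   which needs 2K units per coordinate; hence the second layer sees
   sqrt d <x^(1), x^(2)> up to an error sqrt d * d h^2 / 8.  It then computes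
   psi_{3d} exactly with 6d + 2 ReLUs, and psi_n is 2n-Lipschitz, which gives the
   O(d^{5/2} / K) error.  Positive homogeneity of the ReLU lets the weights be
   rescaled between layers so that each layer contributes O(d^{5/2}) to the
   squared parameter norm. *)

Import Order.TTheory GRing.Theory Num.Theory.
Local Open Scope ring_scope.

Section ReLU.
Context {R : realType}.
Implicit Types c t : R.

Lemma ger0_relu t : 0 <= t -> relu t = t.
Proof. by move=> t0; rewrite /relu max_l. Qed.

Lemma ler0_relu t : t <= 0 -> relu t = 0.
Proof. by move=> t0; rewrite /relu max_r. Qed.

Lemma relu_cases t : (0 <= t /\ relu t = t) \/ (t <= 0 /\ relu t = 0).
Proof.
have [t0|t0] := leP 0 t; [left|right]; first by rewrite ger0_relu.
by rewrite ler0_relu ltW.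
Qed.

Lemma relu_pM c t : 0 <= c -> relu (c * t) = c * relu t.
Proof. by move=> c0; rewrite /relu maxr_pMr // mulr0. Qed.

End ReLU.

Ltac case_relu t := case: (relu_cases t) => [[? ->]|[? ->]].

Section Sawtooth.
Context {R : realType}.
Implicit Types a b c t u : R.

Lemma relu_incr_shift {t u b c} : t <= u -> b <= c ->
  relu (u + b) - relu (t + b) <= relu (u + c) - relu (t + c).
Proof.
by move=> tu bc; case_relu (u + b); case_relu (t + b); case_relu (u + c);
  case_relu (t + c); lra.
Qed.

Definition ramp a t : R := relu (t + a) - relu (t - a).

Lemma ramp_incr {a t u} : 0 <= a -> t <= u ->
  0 <= ramp a u - ramp a t <= u - t.
Proof.
move=> a0 tu; rewrite /ramp.
by case_relu (u + a); case_relu (u - a); case_relu (t + a); case_relu (t - a);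
  apply/andP; split; lra.
Qed.

Lemma ramp_incr_le {a b t u} : a <= b -> t <= u ->
  ramp a u - ramp a t <= ramp b u - ramp b t.
Proof.
move=> ab tu; rewrite /ramp.
have := relu_incr_shift tu ab.
have : relu (u - b) - relu (t - b) <= relu (u - a) - relu (t - a).
  by apply: relu_incr_shift => //; lra.
lra.
Qed.

Definition alt_ramp (q : nat -> R) m t : R :=
  \sum_(1 <= j < m.+1) (-1) ^+ (j + m) * ramp (q j) t.

Lemma alt_rampS (q : nat -> R) m t :
  alt_ramp q m.+1 t = ramp (q m.+1) t - alt_ramp q m t.
Proof.
rewrite /alt_ramp big_nat_recr //= -signr_odd addnn odd_double mul1r addrC.
congr (_ + _); rewrite -sumrN; apply: eq_bigr => j _.
by rewrite addnS exprS mulN1r mulNr.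
Qed.

Lemma alt_ramp_incr {q : nat -> R} m {t u} :
  (forall j, 0 <= q j) -> (forall j, q j <= q j.+1) -> t <= u ->
  0 <= alt_ramp q m u - alt_ramp q m t <= ramp (q m) u - ramp (q m) t.
Proof.
move=> q_ge0 q_incr tu; elim: m => [|m /andP [lo hi]].
  by rewrite /alt_ramp !big_geq // subrr lexx; case/andP: (ramp_incr (q_ge0 0%N) tu).
rewrite !alt_rampS; have := ramp_incr_le (q_incr m) tu.
by move=> le_ramp; apply/andP; split; lra.
Qed.

Definition saw_knot n j : R := (2 * j - 1)%:R / (2 * n)%:R.

Lemma saw_knot_ge0 n j : 0 <= saw_knot n j.
Proof. by rewrite /saw_knot divr_ge0 ?ler0n. Qed.

Lemma saw_knot_incr n j : saw_knot n j <= saw_knot n j.+1.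
Proof. by rewrite /saw_knot ler_wpM2r ?invr_ge0 ?ler0n // ler_nat; lia. Qed.

Lemma saw_knot_le1 {n j} : (j <= n)%N -> saw_knot n j <= 1.
Proof.
case: n => [|n] jn; first by rewrite /saw_knot muln0 invr0 mulr0 ler01.
by rewrite /saw_knot ler_pdivrMr ?ltr0n ?muln_gt0 // mul1r ler_nat; lia.
Qed.

Lemma psi_ramp n t :
  psi n t = - (2 * n%:R) * ramp 1 t + 4 * n%:R * alt_ramp (saw_knot n) n t.
Proof.
rewrite /psi (eq_bigr (fun j => (-1) ^+ (j + n) * ramp (saw_knot n j) t)).
  by rewrite /alt_ramp /ramp; ring.
by move=> j _; rewrite /ramp /saw_knot addn1 exprS; ring.
Qed.

(* Increments of psi n are -2n times those of [ramp 1] plus 4n times those of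
   the alternating sum, which lie between 0 and those of [ramp 1]. *)
Lemma psi_lipschitz n t u : `|psi n u - psi n t| <= 2 * n%:R * `|u - t|.
Proof.
wlog tu : t u / t <= u.
  move=> H; case/orP: (le_total t u) => [|ut]; first exact: H.
  by rewrite distrC (distrC u); exact: H.
have /andP [alt_lo alt_hi] :=
  alt_ramp_incr n (saw_knot_ge0 n) (saw_knot_incr n) tu.
have knot_le := ramp_incr_le (saw_knot_le1 (leqnn n)) tu.
have /andP [ramp_lo ramp_hi] := ramp_incr ler01 tu.
have n0 : 0 <= n%:R :> R by rewrite ler0n.
rewrite !psi_ramp [`|u - t|]ger0_norm ?subr_ge0 // ler_norml; apply/andP; split; nra.
Qed.

End Sawtooth.

Section SquareApprox.
Context {R : realType}.
Implicit Types h t : R.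

Definition half_knot h j : R := (j%:R + 2^-1) * h.

Definition hinge_sum K h t : R := \sum_(j < K) 2 * h * relu (t - half_knot h j).

Lemma hinge_sum_tail K h t : 0 <= h -> (K%:R - 2^-1) * h <= t ->
  hinge_sum K h t = 2 * K%:R * h * t - K%:R ^+ 2 * h ^+ 2.
Proof.
move=> h0; elim: K t => [|K IH] t tK; first by rewrite /hinge_sum big_ord0; ring.
rewrite -(natr1 K) in tK *.
rewrite /hinge_sum big_ord_recr /= -/(hinge_sum K h t) IH; last by nra.
by rewrite ger0_relu /half_knot; [field | lra].
Qed.

Lemma hinge_sum_sq_err K h t : 0 < h -> 0 <= t <= (K%:R + 2^-1) * h ->
  `|t ^+ 2 - hinge_sum K h t| <= h ^+ 2 / 4.
Proof.
move=> h0; elim: K t => [|K IH] t /andP [t0 tK].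
  by rewrite /hinge_sum big_ord0 subr0 ger0_norm ?sqr_ge0 //; rewrite add0r in tK; nra.
have [tK'|tK'] := leP t ((K%:R + 2^-1) * h).
  rewrite /hinge_sum big_ord_recr /= ler0_relu ?mulr0 ?addr0.
    by apply: IH; rewrite t0 tK'.
  by rewrite /half_knot; lra.
rewrite hinge_sum_tail; last 2 first.
- exact: ltW.
- by rewrite mulrSr; lra.
have -> : t ^+ 2 - (2 * K.+1%:R * h * t - K.+1%:R ^+ 2 * h ^+ 2)
        = (t - K.+1%:R * h) ^+ 2 by ring.
by rewrite ger0_norm ?sqr_ge0 // mulrSr; rewrite mulrSr in tK; nra.
Qed.

Definition sq_approx K h t : R :=
  \sum_(j < K) (relu (t - half_knot h j) + relu (- t - half_knot h j)).

Lemma sq_approxN K h t : sq_approx K h (- t) = sq_approx K h t.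
Proof. by apply: eq_bigr => j _; rewrite opprK addrC. Qed.

Lemma sq_approx_hinge K h t : 0 <= h -> 0 <= t ->
  2 * h * sq_approx K h t = hinge_sum K h t.
Proof.
move=> h0 t0; rewrite mulr_sumr; apply: eq_bigr => j _.
have knot_ge0 : 0 <= half_knot h j by rewrite mulr_ge0 // addr_ge0 ?invr_ge0.
by rewrite (@ler0_relu _ (- t - _)) ?addr0 //; lra.
Qed.

Lemma sq_approx_err {K h t} : 0 < h -> `|t| <= (K%:R + 2^-1) * h ->
  `|t ^+ 2 - 2 * h * sq_approx K h t| <= h ^+ 2 / 4.
Proof.
move=> h0; wlog t0 : t / 0 <= t.
  move=> H; case/orP: (le_total 0 t) => [|t_le0]; first exact: H.
  by rewrite -sq_approxN -sqrrN -normrN; apply: H; rewrite oppr_ge0.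
rewrite sq_approx_hinge ?(ltW h0) // => tK; apply: hinge_sum_sq_err => //.
by rewrite t0 -(ger0_norm t0).
Qed.

End SquareApprox.

Lemma big_ord_mul {T : Type} {idx : T} (op : Monoid.law idx) a b (F : nat -> T) :
  \big[op/idx]_(k < a * b) F k
  = \big[op/idx]_(x < a) \big[op/idx]_(y < b) F (x * b + y)%N.
Proof.
elim: a => [|a IH]; first by rewrite mul0n !big_ord0.
by rewrite mulSnr big_split_ord /= IH big_ord_recr.
Qed.

Section SawtoothNetwork.
Context {R : realType}.

Definition parity_sign k : R := (-1) ^+ (k %% 2).

Definition saw_weight n k : R :=
  if (k < n * 2)%N then - (4 * n%:R) * parity_sign k * (-1) ^+ ((k %/ 2).+1 + n)
  else - (2 * n%:R) * parity_sign k.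

Definition saw_bias n k : R :=
  if (k < n * 2)%N then parity_sign k * saw_knot n (k %/ 2).+1 else - parity_sign k.

Lemma saw_pair_ramp n x s : (x <= n)%N ->
  saw_weight n (x * 2) * relu (s - saw_bias n (x * 2))
  + saw_weight n (x * 2).+1 * relu (s - saw_bias n (x * 2).+1)
  = if (x < n)%N then 4 * n%:R * ((-1) ^+ (x.+1 + n) * ramp (saw_knot n x.+1) s)
    else - (2 * n%:R) * ramp 1 s.
Proof.
move=> xn; rewrite /saw_weight /saw_bias /parity_sign.
have [-> ->] : ((x * 2) %% 2 = 0 /\ (x * 2).+1 %% 2 = 1)%N by lia.
have [-> ->] : ((x * 2) %/ 2 = x /\ (x * 2).+1 %/ 2 = x)%N by lia.
have [-> ->] : (x * 2 < n * 2)%N = (x < n)%N /\ ((x * 2).+1 < n * 2)%N = (x < n)%N.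
  by split; apply/idP/idP; lia.
by rewrite /ramp; case: ifP => _; rewrite ?expr0 ?expr1 ?mul1r ?mulN1r ?opprK; ring.
Qed.

Lemma psi_relu_sum n s :
  \sum_(k < n.+1 * 2) saw_weight n k * relu (s - saw_bias n k) = psi n s.
Proof.
rewrite (big_ord_mul _ _ _ (fun k => saw_weight n k * relu (s - saw_bias n k))).
rewrite big_ord_recr /= psi_ramp /alt_ramp big_add1 /= big_mkord mulr_sumr addrC.
congr (_ + _).
  by rewrite !big_ord_recr big_ord0 /= add0r addn0 addn1 saw_pair_ramp // ltnn.
apply: eq_bigr => x _.
by rewrite !big_ord_recr big_ord0 /= add0r addn0 addn1 saw_pair_ramp ?ltn_ord // ltnW.
Qed.

Lemma saw_bias_bound n k : `|saw_bias n k| <= 1.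
Proof.
rewrite /saw_bias /parity_sign; case: ifP => kn; last by rewrite normrN normr_sign.
by rewrite normrM normr_sign mul1r ger0_norm ?saw_knot_ge0 // saw_knot_le1 //; lia.
Qed.

Lemma saw_weight_bound n k : `|saw_weight n k| <= 4 * n%:R.
Proof.
have n0 : 0 <= n%:R :> R by rewrite ler0n.
rewrite /saw_weight /parity_sign.
case: ifP => _; rewrite !normrM ?normr_sign ?mulr1 normrN.
  by rewrite ger0_norm ?mulr_ge0.
by rewrite ger0_norm ?mulr_ge0 //; lra.
Qed.

End SawtoothNetwork.

Section Coordinates.
Context {R : realType}.

Definition ncoord {n} (v : 'cV[R]_n) (i : nat) : R :=
  \sum_(k < n) (k == i :> nat)%:R * v k 0.

Lemma ncoordE n (v : 'cV[R]_n) (i : 'I_n) : ncoord v i = v i 0.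
Proof.
rewrite /ncoord (bigD1 i) //= eqxx mul1r big1 ?addr0 // => k /negbTE ki.
by rewrite -(inj_eq val_inj) in ki; rewrite ki mul0r.
Qed.

Lemma dotvDD n (u v : 'cV[R]_n) :
  dotv (u + v) (u + v) = dotv u u + dotv v v + 2 * dotv u v.
Proof.
rewrite /dotv mulr_sumr -!big_split /=; apply: eq_bigr => i _.
by rewrite mxE; ring.
Qed.

Lemma dotv_ge0 {n} (u : 'cV[R]_n) : 0 <= dotv u u.
Proof. by rewrite sumr_ge0 // => i _; rewrite -expr2 sqr_ge0. Qed.

Lemma sphere_dotv n (u : 'cV[R]_n) : on_sphere u -> dotv u u = 1.
Proof. by move=> su; rewrite -(sqr_sqrtr (dotv_ge0 u)) su expr1n. Qed.

Lemma sphere_coord_le1 {n} {u : 'cV[R]_n} i : on_sphere u -> `|u i 0| <= 1.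
Proof.
move=> /sphere_dotv u1; rewrite -(expr_le1 (_ : 0 < 2)%N) // real_normK ?num_real //.
rewrite -u1 /dotv (bigD1 i) //= -expr2 lerDl sumr_ge0 // => j _.
by rewrite -expr2 sqr_ge0.
Qed.

Lemma sqsum_le {m n} {A : 'M[R]_(m, n)} c :
  (forall i j, A i j ^+ 2 <= c) -> sqsum A <= (m * n)%:R * c.
Proof.
move=> Ac; apply: le_trans (_ : \sum_(i < m) \sum_(j < n) c <= _).
  by apply: ler_sum => i _; apply: ler_sum => j _.
by rewrite sumr_const card_ord sumr_const card_ord -mulrnA mulnC mulr_natl.
Qed.

End Coordinates.

Section Network.
Context {R : realType}.
Variables d K : nat.
Hypotheses (d_gt0 : (0 < d)%N) (K_gt0 : (0 < K)%N).

Definition mesh : R := 2 / K%:R.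
Definition sqrt_d : R := Num.sqrt d%:R.
Definition scale1 : R := Num.sqrt (d%:R / K%:R).
Definition scale2 : R := Num.sqrt sqrt_d.

(* First-layer unit m = a * d + i (a < 2K, i < d) computes
   scale1 * [(-1)^a t_i - c_(a/2)]_+; second-layer unit k is unit k of
   [psi_relu_sum] applied to sqrt d * [inner_approx x], scaled by scale2.  The
   scalings cancel through the ReLUs and only balance the norm between layers. *)
Definition coord_select : 'M[R]_(2 * K * d, d) :=
  \matrix_(m, i) (scale1 * parity_sign (m %/ d)%N * (i == (m %% d)%N :> nat)%:R).

Definition approx_net : params R d (2 * K * d) (6 * d + 2) :=
  @Params R d _ _ (row_mx coord_select coord_select)
    (\col_m (- (scale1 * half_knot mesh (m %/ d %/ 2)%N)))
    (const_mx (scale2 * sqrt_d * mesh / scale1))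
    (\col_k (scale2 * (- sqrt_d - saw_bias (3 * d) k)))
    (\col_k (saw_weight (3 * d) k / scale2)) 0.

Definition coord_sum x : 'cV[R]_d := x1 x + x2 x.

Definition hidden_unit x (m : nat) : R :=
  relu (parity_sign (m %/ d)%N * ncoord (coord_sum x) (m %% d)%N
        - half_knot mesh (m %/ d %/ 2)%N).

Definition inner_approx x : R :=
  mesh * \sum_(i < d) sq_approx K mesh (coord_sum x i 0) - 1.

Lemma Kr_gt0 : 0 < K%:R :> R. Proof. by rewrite ltr0n. Qed.
Lemma mesh_gt0 : 0 < mesh. Proof. by rewrite divr_gt0 ?Kr_gt0. Qed.
Lemma sqrt_d_ge1 : 1 <= sqrt_d.
Proof. by rewrite -sqrtr1 ler_wsqrtr // ler1n. Qed.
Lemma sqrt_d_sq : sqrt_d ^+ 2 = d%:R.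
Proof. by rewrite sqr_sqrtr ?ler0n. Qed.
Lemma scale1_gt0 : 0 < scale1.
Proof. by rewrite sqrtr_gt0 divr_gt0 ?Kr_gt0 ?ltr0n. Qed.
Lemma scale1_sq : scale1 ^+ 2 = d%:R / K%:R.
Proof. by rewrite sqr_sqrtr // divr_ge0 ?ler0n. Qed.
Lemma scale2_gt0 : 0 < scale2.
Proof. by rewrite sqrtr_gt0; apply: lt_le_trans sqrt_d_ge1. Qed.
Lemma scale2_sq : scale2 ^+ 2 = sqrt_d.
Proof. by rewrite sqr_sqrtr // (le_trans ler01 sqrt_d_ge1). Qed.

Lemma layer1E x : reluv (W1 approx_net *m x + b1 approx_net)
  = \col_m (scale1 * hidden_unit x m).
Proof.
have -> : W1 approx_net *m x = coord_select *m coord_sum x.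
  by rewrite /= -{1}(vsubmxK x) mul_row_col -mulmxDr.
apply/colP => m; rewrite !mxE /hidden_unit -relu_pM ?(ltW scale1_gt0) //; congr relu.
rewrite /ncoord mulrBr !mulr_sumr; congr (_ - _).
by apply: eq_bigr => i _; rewrite mxE; ring.
Qed.

Lemma hidden_unit_sum x :
  \sum_(m < 2 * K * d) hidden_unit x m = \sum_(i < d) sq_approx K mesh (coord_sum x i 0).
Proof.
rewrite (big_ord_mul _ _ _ (hidden_unit x)) exchange_big /=; apply: eq_bigr => i _.
rewrite [(2 * K)%N]mulnC (big_ord_mul _ _ _ (fun a => hidden_unit x (a * d + i))).
apply: eq_bigr => j _; rewrite big_ord_recr big_ord1 /= /hidden_unit.
rewrite !divnMDl // !modnMDl divn_small // modn_small // !addn0 ncoordE.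
rewrite /parity_sign.
have [-> ->] : ((j * 2) %/ 2 = j /\ (j * 2 + 1) %/ 2 = j)%N by lia.
have [-> ->] : ((j * 2) %% 2 = 0 /\ (j * 2 + 1) %% 2 = 1)%N by lia.
by rewrite expr0 expr1 mul1r mulN1r.
Qed.

Lemma layer2E x :
  reluv (W2 approx_net *m reluv (W1 approx_net *m x + b1 approx_net) + b2 approx_net)
  = \col_k (scale2 * relu (sqrt_d * inner_approx x - saw_bias (3 * d) k)).
Proof.
rewrite layer1E; apply/colP => k; rewrite !mxE -relu_pM ?(ltW scale2_gt0) //.
congr relu; rewrite (eq_bigr (fun m : 'I__ => scale2 * sqrt_d * mesh * hidden_unit x m)).
  by rewrite -mulr_sumr hidden_unit_sum /inner_approx; ring.
by move=> m _; rewrite !mxE mulrA divfK // gt_eqF ?scale1_gt0.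
Qed.

Lemma approx_netE x : net approx_net x = psi (3 * d) (sqrt_d * inner_approx x).
Proof.
rewrite /net layer2E /= addr0 mxE.
have -> : (6 * d + 2 = (3 * d).+1 * 2)%N by lia.
rewrite -psi_relu_sum; apply: eq_bigr => k _.
by rewrite !mxE mulrA divfK // gt_eqF ?scale2_gt0.
Qed.

Lemma coord_sum_bound x i : Xd x -> `|coord_sum x i 0| <= (K%:R + 2^-1) * mesh.
Proof.
case=> su sv; rewrite mxE; apply: le_trans (ler_normD _ _) _.
have := sphere_coord_le1 i su; have := sphere_coord_le1 i sv.
have -> : (K%:R + 2^-1) * mesh = 2 + K%:R^-1.
  by rewrite /mesh; field; rewrite gt_eqF ?Kr_gt0.
have : 0 < K%:R^-1 :> R by rewrite invr_gt0 Kr_gt0.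
lra.
Qed.

Lemma inner_approx_err x : Xd x ->
  `|dotv (x1 x) (x2 x) - inner_approx x| <= d%:R / (2 * K%:R).
Proof.
move=> Xx; have [/sphere_dotv u1 /sphere_dotv v1] := Xx.
have t_sq : \sum_(i < d) coord_sum x i 0 ^+ 2 = 2 + 2 * dotv (x1 x) (x2 x).
  transitivity (dotv (coord_sum x) (coord_sum x)).
    by apply: eq_bigr => i _; rewrite expr2.
  by rewrite dotvDD u1 v1; ring.
have -> : dotv (x1 x) (x2 x) - inner_approx x = 2^-1 *
    \sum_(i < d) (coord_sum x i 0 ^+ 2 - 2 * mesh * sq_approx K mesh (coord_sum x i 0)).
  by rewrite sumrB t_sq -!mulr_sumr /inner_approx; field.
rewrite normrM ger0_norm ?invr_ge0 //.
have term_err i : `|coord_sum x i 0 ^+ 2 - 2 * mesh * sq_approx K mesh (coord_sum x i 0)|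
    <= K%:R^-1.
  apply: le_trans (sq_approx_err mesh_gt0 (coord_sum_bound _ i Xx)) _.
  have -> : mesh ^+ 2 / 4 = K%:R^-1 * K%:R^-1.
    by rewrite /mesh; field; rewrite gt_eqF ?Kr_gt0.
  by rewrite ler_piMl ?invr_ge0 ?ler0n // invf_le1 ?Kr_gt0 // ler1n.
have -> : d%:R / (2 * K%:R) = 2^-1 * (d%:R * K%:R^-1) :> R.
  by field; rewrite gt_eqF ?Kr_gt0.
rewrite ler_pM2l ?invr_gt0 //; apply: le_trans (ler_norm_sum _ _ _) _.
apply: le_trans (ler_sum _ (fun i _ => term_err i)) _.
by rewrite sumr_const card_ord mulr_natl.
Qed.

Lemma approx_net_err x : Xd x ->
  `|f_target x - net approx_net x| <= 3 * (d%:R ^+ 2 * sqrt_d) / K%:R.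
Proof.
move=> Xx; rewrite /f_target -/sqrt_d approx_netE.
apply: le_trans (psi_lipschitz _ _ _) _.
have r0 : 0 <= sqrt_d by apply: le_trans sqrt_d_ge1.
rewrite -mulrBr normrM ger0_norm //.
have -> : 3 * (d%:R ^+ 2 * sqrt_d) / K%:R
          = 2 * (3 * d)%:R * (sqrt_d * (d%:R / (2 * K%:R))).
  by rewrite natrM; field; rewrite gt_eqF ?Kr_gt0.
by rewrite !ler_wpM2l ?mulr_ge0 ?ler0n //; exact: inner_approx_err.
Qed.

Lemma sqrt_d_exp_le {k} : (k <= 5)%N -> sqrt_d ^+ k <= sqrt_d ^+ 5.
Proof. by move=> k5; apply: ler_weXn2l => //; exact: sqrt_d_ge1. Qed.

Lemma coord_select_row m : \sum_(i < d) coord_select m i ^+ 2 = scale1 ^+ 2.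
Proof.
rewrite (bigD1 (Ordinal (ltn_pmod m d_gt0))) //= big1 ?addr0.
  by rewrite mxE eqxx mulr1 exprMn sqrr_sign mulr1.
move=> i /negbTE im; rewrite mxE.
by rewrite -(inj_eq val_inj) /= in im; rewrite im mulr0 expr0n.
Qed.

Lemma sqsum_W1 : sqsum (W1 approx_net) <= 4 * sqrt_d ^+ 5.
Proof.
rewrite /sqsum (eq_bigr (fun=> 2 * scale1 ^+ 2)) => [|m _]; last first.
  rewrite big_split_ord /=.
  under eq_bigr do rewrite row_mxEl.
  under [X in _ + X]eq_bigr do rewrite row_mxEr.
  by rewrite coord_select_row; ring.
rewrite sumr_const card_ord -(mulr_natl (2 * scale1 ^+ 2)) scale1_sq !natrM -sqrt_d_sq.
rewrite [leLHS](_ : _ = 4 * sqrt_d ^+ 4); first exact/ler_wpM2l/sqrt_d_exp_le.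
by field; rewrite gt_eqF ?Kr_gt0.
Qed.

Lemma half_knot_mesh_bound {j} : (j < K)%N -> 0 <= half_knot mesh j <= 2.
Proof.
move=> jK; have jK' : j%:R + 1 <= K%:R :> R by rewrite natr1 ler_nat.
have K0 := Kr_gt0; have j0 : 0 <= j%:R :> R by rewrite ler0n.
rewrite /half_knot /mesh mulrA ler_pdivrMr // divr_ge0 ?mulr_ge0 ?ler0n //=; lra.
Qed.

Lemma sqsum_b1 : sqsum (b1 approx_net) <= 8 * sqrt_d ^+ 5.
Proof.
apply: le_trans (sqsum_le (4 * scale1 ^+ 2) _) _.
  move=> m j; rewrite mxE sqrrN exprMn mulrC ler_wpM2r ?sqr_ge0 //.
  have mK : (m %/ d %/ 2 < K)%N.
    by have := ltn_ord m; rewrite !ltn_divLR //; lia.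
  by have /andP [c0 c2] := half_knot_mesh_bound mK; nra.
rewrite scale1_sq muln1 !natrM -sqrt_d_sq.
rewrite [leLHS](_ : _ = 8 * sqrt_d ^+ 4); first exact/ler_wpM2l/sqrt_d_exp_le.
by field; rewrite gt_eqF ?Kr_gt0.
Qed.

Lemma sqsum_W2 : sqsum (W2 approx_net) <= 64 * sqrt_d ^+ 5.
Proof.
apply: le_trans (sqsum_le ((scale2 * sqrt_d * mesh / scale1) ^+ 2) _) _.
  by move=> i j; rewrite mxE.
rewrite expr_div_n !exprMn scale2_sq scale1_sq /mesh !natrM natrD natrM -sqrt_d_sq.
rewrite [leLHS](_ : _ = 48 * sqrt_d ^+ 5 + 16 * sqrt_d ^+ 3).
  by have := sqrt_d_exp_le (isT : (3 <= 5)%N); lra.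
by field; rewrite ?gt_eqF ?Kr_gt0 ?(lt_le_trans ltr01 sqrt_d_ge1).
Qed.

Lemma sqsum_b2 : sqsum (b2 approx_net) <= 32 * sqrt_d ^+ 5.
Proof.
have r1 := sqrt_d_ge1.
apply: le_trans (sqsum_le (4 * sqrt_d ^+ 3) _) _.
  move=> k j; rewrite mxE exprMn scale2_sq.
  have := saw_bias_bound (R:=R) (3 * d) k; rewrite ler_norml => /andP [q1 q2].
  have sq : (- sqrt_d - saw_bias (3 * d) k) ^+ 2 <= 4 * sqrt_d ^+ 2.
    have : 0 <= (sqrt_d - saw_bias (3 * d) k) * (3 * sqrt_d + saw_bias (3 * d) k).
      by apply: mulr_ge0; lra.
    nra.
  apply: le_trans (ler_wpM2l (le_trans ler01 r1) sq) _.
  by rewrite mulrCA -exprS.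
rewrite muln1 natrD natrM -sqrt_d_sq.
by have := sqrt_d_exp_le (isT : (3 <= 5)%N); nra.
Qed.

Lemma sqsum_w3 : sqsum (w3 approx_net) <= 1152 * sqrt_d ^+ 5.
Proof.
have r1 := sqrt_d_ge1.
apply: le_trans (sqsum_le (144 * sqrt_d ^+ 3) _) _.
  move=> k j; rewrite mxE expr_div_n scale2_sq ler_pdivrMr; last by lra.
  have := saw_weight_bound (R:=R) (3 * d) k.
  rewrite ler_norml natrM -sqrt_d_sq => /andP [w1 w2].
  nra.
rewrite muln1 natrD natrM -sqrt_d_sq.
by have := sqrt_d_exp_le (isT : (3 <= 5)%N); nra.
Qed.

Lemma approx_net_norm : pnorm2 approx_net <= 1260 * (d%:R ^+ 2 * sqrt_d).
Proof.
rewrite -sqrt_d_sq -exprM -exprSr.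
have := sqsum_W1; have := sqsum_b1; have := sqsum_W2; have := sqsum_b2.
have := sqsum_w3; rewrite /pnorm2 [b3 _]/= expr0n /=; lra.
Qed.

End Network.

Lemma Linf_norm_le (R : realType) d (g : 'cV[R]_(d + d) -> R) c :
  (forall x, Xd x -> `|g x| <= c) -> (Linf_norm g <= c%:E)%E.
Proof. by move=> gc; apply: ge_ereal_sup => _ [x Xx <-]; rewrite lee_fin gc. Qed.

Lemma R3_net_le {R : realType} {d m1 m2} (p : params R d m1 m2) {omega} :
  (m1 <= omega)%N -> (m2 <= omega)%N -> (R3 (net p) omega <= (pnorm2 p / 3)%:E)%E.
Proof. by move=> m1w m2w; apply: ereal_inf_lbound; exists m1, m2, p. Qed.

Theorem lemma14 (R : realType) :
  exists C1 C2 : R,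
  forall d K : nat, (2 <= d)%N -> (1 <= K)%N ->
  let omega := maxn (6 * d + 2) (2 * K * d) in
  exists (m1 m2 : nat) (p : params R d m1 m2),
    [/\ (m1 <= omega)%N, (m2 <= omega)%N,
        (@Linf_norm R d (fun x => (f_target x - net p x)%R)
           <= (C1 * (d%:R ^+ 2 * Num.sqrt d%:R) / K%:R)%:E)%E &
        (@R3 R d (net p) omega <= (C2 * (d%:R ^+ 2 * Num.sqrt d%:R))%:E)%E].
Proof.
exists 3, 420 => d K d_ge2 K_gt0 omega.
have d_gt0 : (0 < d)%N by lia.
have [m1w m2w] : (2 * K * d <= omega)%N /\ (6 * d + 2 <= omega)%N.
  by split; [exact: leq_maxr | exact: leq_maxl].
exists (2 * K * d)%N, (6 * d + 2)%N, (approx_net d K); split => //.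
  by apply: Linf_norm_le => x; exact: approx_net_err.
apply: le_trans (R3_net_le _ m1w m2w) _; rewrite lee_fin -/(sqrt_d d).
by have := approx_net_norm (R:=R) d K d_gt0 K_gt0; lra.
Qed.
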